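(* Let $K$ be a field, $S=K[x_1,\ldots,x_n]$, and $\alpha=(k_1,\ldots,k_n)\in\mathbb N^n$. A monomial ideal $I\subset S$ is weakly polymatroidal if and only if its expansion $I^\alpha\subset S^\alpha$ is weakly polymatroidal.
   Context: $\mathbb N$ denotes the positive integers. For $\alpha=(k_1,\ldots,k_n)\in\mathbb N^n$ let $S^\alpha=K[x_{ij}:1\le i\le n,\ 1\le j\le k_i]$ and $P_i=(x_{i1},\ldots,x_{ik_i})\subset S^\alpha$. If $I$ is a monomial ideal with minimal monomial generating set $G(I)=\{\mathbf x^{\mathbf a_1},\ldots,\mathbf x^{\mathbf a_r}\}$, its expansion is $I^\alpha=\sum_{l=1}^r P_1^{\mathbf a_l(1)}\cdots P_n^{\mathbf a_l(n)}\subset S^\alpha$. A monomial ideal $I$ in a polynomial ring $K[x_1,\ldots,x_n]$ is weakly polymatroidal with respect to the ordering $x_1>\cdots>x_n$ if for every two monomials $u=x_1^{a_1}\cdots x_n^{a_n}$ and $v=x_1^{b_1}\cdots x_n^{b_n}$ in $G(I)$ with $a_1=b_1,\ldots,a_{t-1}=b_{t-1}$ and $a_t>b_t$, there exists $j>t$ such that $x_t(v/x_j)\in I$. $I$ is weakly polymatroidal if it is weakly polymatroidal with respect to some ordering of the variables. *)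

(* Monomial ideals are represented combinatorially by the
   set of exponent vectors of the monomials they contain. *)
From mathcomp Require Import all_boot.
Set Implicit Arguments. Unset Strict Implicit. Unset Printing Implicit Defensive.

Section MonomialIdeals.
Variable V : finType.

(* a monomial x^a is given by its exponent vector a : V -> nat *)
Definition mdivides (a b : V -> nat) : Prop := forall x, a x <= b x.

Definition monset := (V -> nat) -> Prop.

(* a set of monomials is the monomial set of a monomial ideal iff it is
   closed under multiplication by monomials *)
Definition is_monideal (I : monset) : Prop :=
  forall a b, mdivides a b -> I a -> I b.

Definition mingens (I : monset) (a : V -> nat) : Prop :=
  I a /\ forall b, I b -> mdivides b a -> mdivides a b.

Definition mon_unit : monset := fun _ => True.
Definition mon_sum (I J : monset) : monset := fun b => I b \/ J b.
Definition mon_prod (I J : monset) : monset :=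
  fun b => exists u w, [/\ I u, J w & mdivides (fun x => u x + w x) b].
Definition mon_pow (I : monset) (e : nat) : monset := iter e (mon_prod I) mon_unit.

Definition mshift (v : V -> nat) (t j : V) : V -> nat :=
  fun x => (if x == t then 1 else 0) + (v x - (if x == j then 1 else 0)).

(* weakly polymatroidal w.r.t. the ordering of the variables in which
   x_u > x_w iff r u < r w  (r injective, i.e. a total order on V) *)
Definition weakly_polymatroidal_wrt (r : V -> nat) (I : monset) : Prop :=
  forall u v, mingens I u -> mingens I v ->
  forall t, (forall w, r w < r t -> u w = v w) -> v t < u t ->
  exists j, [/\ r t < r j, 0 < v j & I (mshift v t j)].

Definition weakly_polymatroidal (I : monset) : Prop :=
  exists r : V -> nat, injective r /\ weakly_polymatroidal_wrt r I.
End MonomialIdeals.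

(* variables of S^alpha : x_{ij}, 1 <= i <= n, 1 <= j <= k_i *)
Definition expvar (n : nat) (k : 'I_n -> nat) : finType := {i : 'I_n & 'I_(k i)}.

Definition Pideal (n : nat) (k : 'I_n -> nat) (i : 'I_n) : monset (expvar k) :=
  fun b => exists j : 'I_(k i), 0 < b (Tagged (fun i => 'I_(k i)) j).

Definition Pprod (n : nat) (k : 'I_n -> nat) (a : 'I_n -> nat) : monset (expvar k) :=
  foldr (fun i acc => mon_prod (mon_pow (@Pideal n k i) (a i)) acc)
        (@mon_unit (expvar k)) (enum 'I_n).

Definition expansion (n : nat) (k : 'I_n -> nat) (I : monset 'I_n) : monset (expvar k) :=
  fun b => exists a, mingens I a /\ @Pprod n k a b.

From mathcomp Require Import all_boot zify.
From Stdlib Require Import Classical.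
Set Implicit Arguments. Unset Strict Implicit. Unset Printing Implicit Defensive.

(* Contracting x_{ij} |-> x_i sends I^alpha onto I: a monomial lies in I^alpha, or
   is a minimal generator of it, exactly when its contraction is so for I.  Order the
   x_{ij} block by block, following the order of the x_i, and by j inside a block.
   If two generators u, v of I^alpha first differ at x_{i0 j0}, either their
   contractions first differ at x_i0 in the same direction, and the exchange
   x_i0 (v / x_i1) in I lifts to any x_{i1 j} dividing v, or v has a later variable
   x_{i0 j1} of the same block, and an exchange inside a block leaves the contraction
   unchanged.  Conversely, putting the i-th exponent of a monomial of S on x_{i1}
   embeds G(I) into G(I^alpha), and the order of the x_{i1} works for I. *)

Lemma ltn_sum (T : finType) (F G : T -> nat) x :
  (forall y, F y <= G y) -> F x < G x -> \sum_y F y < \sum_y G y.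
Proof.
move=> leFG ltFGx; rewrite (bigD1 x) //= [ltnRHS](bigD1 x) //=.
have : \sum_(y | y != x) F y <= \sum_(y | y != x) G y by apply: leq_sum.
lia.
Qed.

Section MonomialIdeals.
Variables (V : finType) (I : monset V).

Lemma not_mdividesP (a b : V -> nat) : ~ mdivides a b -> exists x, b x < a x.
Proof.
move=> nab; apply: NNPP => nlt; apply: nab => x.
by rewrite leqNgt; apply/negP => ltx; apply: nlt; exists x.
Qed.

Lemma mingens_exists c : I c -> exists2 a, mingens I a & mdivides a c.
Proof.
have [N ltcN] : exists N, \sum_x c x < N by exists (\sum_x c x).+1.
elim: N c ltcN => // N IH c ltcN Ic.
case: (classic (mingens I c)) => [mc | nmc]; first by exists c.
have [b [Ib bc nbc]] : exists b, [/\ I b, mdivides b c & ~ mdivides c b].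
  apply: NNPP => nex; apply: nmc; split=> // b Ib bc.
  by apply: NNPP => nbc; apply: nex; exists b.
have [x ltbcx] := not_mdividesP nbc.
have ltbc := ltn_sum bc ltbcx.
have [a ma ab] := IH b (leq_trans ltbc ltcN) Ib.
by exists a => // y; apply: leq_trans (ab y) (bc y).
Qed.

Hypothesis monI : is_monideal I.

Lemma monideal_eq (a b : V -> nat) : (forall x, a x = b x) -> I a -> I b.
Proof. by move=> eab; apply: monI => x; rewrite eab. Qed.

Lemma mingens_eq (a b : V -> nat) : (forall x, a x = b x) -> mingens I a -> mingens I b.
Proof.
move=> eab [Ia mina]; split; first exact: monideal_eq Ia.
by move=> c Ic cb x; rewrite -eab; apply: mina => // y; rewrite eab.
Qed.

End MonomialIdeals.

Section Expansion.
Variables (n : nat) (k : 'I_n -> nat).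
Local Notation W := (expvar k).
Local Notation slot j := (Tagged (fun i => 'I_(k i)) j).

(* The exponent vector of the image of x^b under the substitution x_{ij} |-> x_i. *)
Definition contract (b : W -> nat) (i : 'I_n) : nat := \sum_(j < k i) b (slot j).

Lemma contract_eq_in (b c : W -> nat) i :
  (forall j : 'I_(k i), b (slot j) = c (slot j)) -> contract b i = contract c i.
Proof. by move=> ebc; apply: eq_bigr => j _. Qed.

Lemma contract_le (b c : W -> nat) i : mdivides b c -> contract b i <= contract c i.
Proof. by move=> bc; apply: leq_sum => j _. Qed.

Lemma leq_slot_contract (b : W -> nat) i (j : 'I_(k i)) : b (slot j) <= contract b i.
Proof. by rewrite /contract (bigD1 j) //= leq_addr. Qed.

Lemma contract_gt0P (b : W -> nat) i :
  0 < contract b i -> exists j : 'I_(k i), 0 < b (slot j).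
Proof.
move=> pos; apply: NNPP => nex; move: pos.
rewrite lt0n sum_nat_eq0; apply/negP/negPn/forallP => j; apply/implyP => _.
by rewrite eqn0Ngt; apply/negP => bj; apply: nex; exists j.
Qed.

Lemma contractD (b c : W -> nat) i :
  contract (fun x => b x + c x) i = contract b i + contract c i.
Proof. exact: big_split. Qed.

Lemma contract_delta (y : W) i : contract (fun x => x == y : nat) i = (tag y == i).
Proof.
case: y => i' j' /=; rewrite /contract.
have [<-|ne] := eqVneq i' i.
  rewrite (bigD1 j') //= eqxx big1 // => j /negbTE nj.
  by rewrite eq_Tagged nj.
by rewrite big1 // => j _; case: eqP => // /(congr1 tag) /= eii; rewrite eii eqxx in ne.
Qed.

Lemma contract_subdelta (b : W -> nat) y i :
  0 < b y -> contract (fun x => b x - (x == y)) i = contract b i - (tag y == i).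
Proof.
move=> by0; rewrite -(contract_delta y) -[contract b i](@contract_eq_in
  (fun x => (b x - (x == y)) + (x == y))) ?contractD ?addnK // => j.
by case: (eqVneq (slot j) y) => [->|]; lia.
Qed.

Lemma contract_mshift (v : W -> nat) t s i :
  0 < v s -> contract (mshift v t s) i = (tag t == i) + (contract v i - (tag s == i)).
Proof.
move=> vs0; rewrite -contract_subdelta // -contract_delta -contractD.
by apply: contract_eq_in => j; rewrite /mshift addnC.
Qed.

Lemma mon_pow_PidealP i e (b : W -> nat) :
  mon_pow (@Pideal n k i) e b <-> e <= contract b i.
Proof.
elim: e b => [|e IH] b /=; first by [].
split.
  case=> u [w [[j uj] /IH ew uwb]].
  have := contract_le i uwb; rewrite contractD.
  by have := leq_slot_contract u j; lia.
move=> ltec; have [j bj] : exists j : 'I_(k i), 0 < b (slot j).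
  by apply: contract_gt0P; lia.
exists (fun x => x == slot j : nat), (fun x => b x - (x == slot j)); split.
- by exists j; rewrite eqxx.
- by apply/IH; rewrite contract_subdelta //= eqxx; lia.
- by move=> x /=; case: (eqVneq x (slot j)) => [->|]; lia.
Qed.

Lemma Pprod_seqP (a : 'I_n -> nat) (s : seq 'I_n) (b : W -> nat) : uniq s ->
  foldr (fun i acc => mon_prod (mon_pow (@Pideal n k i) (a i)) acc) (@mon_unit W) s b
  <-> (forall i, i \in s -> a i <= contract b i).
Proof.
elim: s b => [|i s IH] b //= /andP [/negP i_s us].
split.
  case=> u [w [/mon_pow_PidealP au /(IH _ us) aw uwb]] i'.
  have le_ub : mdivides u b by move=> x; have := uwb x; lia.
  have le_wb : mdivides w b by move=> x; have := uwb x; lia.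
  rewrite in_cons => /orP [/eqP -> | i's].
    exact: leq_trans au (contract_le _ le_ub).
  exact: leq_trans (aw _ i's) (contract_le _ le_wb).
move=> ab.
exists (fun x => if tag x == i then b x else 0), (fun x => if tag x == i then 0 else b x).
split.
- apply/mon_pow_PidealP; rewrite (@contract_eq_in _ b) ?ab ?mem_head // => j /=.
  by rewrite eqxx.
- apply/(IH _ us) => i' i's.
  rewrite (@contract_eq_in _ b) ?ab ?in_cons ?i's ?orbT // => j /=.
  by case: eqP => // eii; rewrite -eii in i_s.
- by move=> x /=; case: ifP; rewrite ?addn0.
Qed.

Lemma PprodP (a : 'I_n -> nat) (b : W -> nat) :
  @Pprod n k a b <-> (forall i, a i <= contract b i).
Proof.
rewrite /Pprod Pprod_seqP ?enum_uniq //.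
by split=> ab i; [apply: ab; rewrite mem_enum | move=> _; apply: ab].
Qed.

Variable I : monset 'I_n.
Hypothesis monI : is_monideal I.

Lemma expansionP (b : W -> nat) : @expansion n k I b <-> I (contract b).
Proof.
split; first by case=> a [[Ia _] /PprodP ab]; apply: monI Ia.
by case/mingens_exists=> a ma ab; exists a; split=> //; apply/PprodP.
Qed.

Lemma mingens_expansionP (b : W -> nat) :
  mingens (@expansion n k I) b <-> mingens I (contract b).
Proof.
split.
  case=> /expansionP Ib minb; split=> // c Ic cb; apply: NNPP => /not_mdividesP [i ltci].
  have [j bj] := contract_gt0P (leq_ltn_trans (leq0n _) ltci).
  have Ib' : @expansion n k I (fun x => b x - (x == slot j)).
    apply/expansionP; apply: monI Ic => i'; rewrite contract_subdelta //=.
    by have := cb i'; case: (eqVneq i i') => [<-|]; lia.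
  by have := minb _ Ib' (fun x => leq_subr _ _) (slot j); rewrite eqxx; lia.
case=> Ib minb; split; first exact/expansionP.
move=> c /expansionP Ic cb; case=> i j; rewrite leqNgt; apply/negP => ltcb.
have := minb _ Ic (fun i => contract_le i cb) i.
by rewrite leqNgt /contract (ltn_sum (fun j => cb (slot j)) ltcb).
Qed.

Definition lex_rank (r : 'I_n -> nat) (x : W) : nat := r (tag x) * \max_i k i + tagged x.

Lemma lex_rank_tag r (x y : W) : r (tag x) < r (tag y) -> lex_rank r x < lex_rank r y.
Proof.
move=> ltr; have ltM : tagged x < \max_i k i.
  exact: leq_trans (ltn_ord _) (leq_bigmax (tag x)).
have := leq_mul ltr (leqnn (\max_i k i)); rewrite /lex_rank mulSn; lia.
Qed.

Lemma lex_rank_tagged r (x y : W) :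
  tag x = tag y -> (lex_rank r x < lex_rank r y) = (tagged x < tagged y).
Proof.
rewrite /lex_rank => exy.
by move: (nat_of_ord (tagged x)) (nat_of_ord (tagged y)) => a b; rewrite exy ltn_add2l.
Qed.

Lemma lex_rank_inj r : injective r -> injective (lex_rank r).
Proof.
move=> r_inj [i j] [i' j'] eq_rank.
have eq_r : r i = r i'.
  case: (ltngtP (r i) (r i')) => // ltr.
  - by have := @lex_rank_tag r (slot j) (slot j') ltr; rewrite eq_rank ltnn.
  - by have := @lex_rank_tag r (slot j') (slot j) ltr; rewrite eq_rank ltnn.
move: j eq_rank; rewrite (r_inj _ _ eq_r) => j /eqP.
by rewrite /lex_rank /= eqn_add2l => /eqP /val_inj ->.
Qed.

Lemma later_slot_gt0 (u v : W -> nat) i (j0 : 'I_(k i)) :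
  (forall j : 'I_(k i), j < j0 -> u (slot j) = v (slot j)) ->
  v (slot j0) < u (slot j0) -> contract u i <= contract v i ->
  exists2 j : 'I_(k i), j0 < j & 0 < v (slot j).
Proof.
move=> agree ltvu le_uv; apply: NNPP => nex.
have le_vu : forall j : 'I_(k i), v (slot j) <= u (slot j).
  move=> j; case: (ltngtP j j0) => [ltj | gtj | /val_inj ->]; last exact: ltnW.
  - by rewrite agree.
  - by rewrite leqNgt; apply/negP => ltuv; apply: nex; exists j => //; lia.
by have := ltn_sum le_vu ltvu; rewrite -/(contract v i) -/(contract u i); lia.
Qed.

Lemma expansion_wp_wrt r :
  weakly_polymatroidal_wrt r I -> weakly_polymatroidal_wrt (lex_rank r) (@expansion n k I).
Proof.
move=> wpI u v /mingens_expansionP mu /mingens_expansionP mv [i0 j0] agree ltuv.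
have agree_blocks i : r i < r i0 -> contract u i = contract v i.
  by move=> ltr; apply: contract_eq_in => j; apply/agree/lex_rank_tag.
have [ltc | lec] := ltnP (contract v i0) (contract u i0).
  have [i1 [ltr vi1 Ishift]] := wpI _ _ mu mv i0 agree_blocks ltc.
  have [j1 vj1] := contract_gt0P vi1.
  exists (slot j1); split=> //; first exact: lex_rank_tag.
  apply/expansionP; apply: (monideal_eq monI) Ishift => i.
  by rewrite contract_mshift // /mshift ![_ == i]eq_sym.
have agree_block (j : 'I_(k i0)) : j < j0 -> u (slot j) = v (slot j).
  by move=> ltj; apply: agree; rewrite lex_rank_tagged.
have [j1 ltj vj1] := later_slot_gt0 agree_block ltuv lec.
exists (slot j1); split=> //; first by rewrite lex_rank_tagged.
apply/expansionP; apply: (monideal_eq monI) mv.1 => i; rewrite contract_mshift //=.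
have := leq_slot_contract v j1; case: (eqVneq i0 i) => [<-|] /=; lia.
Qed.

Lemma expansion_wp : weakly_polymatroidal I -> weakly_polymatroidal (@expansion n k I).
Proof.
case=> r [r_inj wpI]; exists (lex_rank r).
by split; [exact: lex_rank_inj | exact: expansion_wp_wrt].
Qed.

Hypothesis k_gt0 : forall i, 0 < k i.

Definition first_slot (i : 'I_n) : W := slot (Ordinal (k_gt0 i)).

Definition lift_first (a : 'I_n -> nat) (x : W) : nat :=
  if x == first_slot (tag x) then a (tag x) else 0.

Lemma contract_lift_first a i : contract (lift_first a) i = a i.
Proof.
rewrite /contract /lift_first (bigD1 (Ordinal (k_gt0 i))) //= eqxx big1 ?addn0 // => j ne_j.
by rewrite eq_Tagged /= (negbTE ne_j).
Qed.

Lemma mingens_lift_first a : mingens I a -> mingens (@expansion n k I) (lift_first a).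
Proof.
move=> ma; apply/mingens_expansionP; apply: (mingens_eq monI) ma => i.
by rewrite contract_lift_first.
Qed.

Lemma wp_wrt_of_expansion rho :
  weakly_polymatroidal_wrt rho (@expansion n k I) ->
  weakly_polymatroidal_wrt (rho \o first_slot) I.
Proof.
move=> wpE u v mu mv t agree ltvu.
have agree_lift w : rho w < rho (first_slot t) -> lift_first u w = lift_first v w.
  by rewrite /lift_first; case: eqP => // -> /agree.
have ltvu_lift : lift_first v (first_slot t) < lift_first u (first_slot t).
  by rewrite /lift_first eqxx.
have [s [lts vs Eshift]] :=
  wpE _ _ (mingens_lift_first mu) (mingens_lift_first mv) _ agree_lift ltvu_lift.
have first_s : s = first_slot (tag s) by move: vs; rewrite /lift_first; case: eqP.
exists (tag s); split; first by rewrite /= -first_s.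
  by move: vs; rewrite /lift_first -first_s eqxx.
move/expansionP: Eshift; apply: (monideal_eq monI) => i.
rewrite contract_mshift // contract_lift_first /mshift /=.
by rewrite ![_ == i]eq_sym.
Qed.

Lemma wp_of_expansion : weakly_polymatroidal (@expansion n k I) -> weakly_polymatroidal I.
Proof.
case=> rho [rho_inj wpE]; exists (rho \o first_slot).
split; last exact: wp_wrt_of_expansion.
by move=> i i' /rho_inj /(congr1 tag).
Qed.

End Expansion.

Theorem theorem1p4 (n : nat) (k : 'I_n -> nat) (hk : forall i, 0 < k i)
    (I : monset 'I_n) (hI : is_monideal I) :
  weakly_polymatroidal I <-> weakly_polymatroidal (@expansion n k I).
Proof. by split; [exact: expansion_wp | exact: wp_of_expansion]. Qed.
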